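(* Let $G=D_n\times\mathbb Z/2$, $H=D_n\times\{0\}$, and let $c_3\le c_4$ be integers with $c_3\ge2$, $c_4>2$. Suppose $f:T(2,2,c_3,c_4)\to G$ is admissible for cover type III-b, i.e. $f$ is surjective, $f(\gamma_1),f(\gamma_2)$ have order 2, $f(\gamma_3)$ has order $c_3$, $f(\gamma_4)$ has order $c_4$, the second components of $f(\gamma_1),f(\gamma_2)$ are $1$ and those of $f(\gamma_3),f(\gamma_4)$ are $0$. Then $c_3=2$ and $c_4=n$, and up to equivalence there is a unique admissible $f$, given by the Hurwitz vector $((yx,1),(e,1),(y,0),(x,0))$.
   Context: $D_n=\langle x,y\mid x^n=y^2=1,\ yxy^{-1}=x^{-1}\rangle$ with neutral element $e$; $\mathbb Z/2$ is written additively with generator $1$. $T(m_1,\dots,m_r):=\langle\gamma_1,\dots,\gamma_r\mid \gamma_1\cdots\gamma_r=1,\ \gamma_i^{m_i}=1\rangle$. The Hurwitz vector of $f$ is $(f(\gamma_1),\dots,f(\gamma_r))$. The braid group $\mathcal B_r$ acts on Hurwitz vectors by $\sigma_i:(\dots,v_i,v_{i+1},\dots)\mapsto(\dots,v_iv_{i+1}v_i^{-1},v_i,\dots)$, and $\mathrm{Aut}(G)_H$ (automorphisms of $G$ preserving $H$) acts componentwise. Two admissible $f,f'$ are equivalent if their Hurwitz vectors lie in the same $\mathcal B_r\times\mathrm{Aut}(G)_H$-orbit. *)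

From HB Require Import structures.
From mathcomp Require Import all_boot all_order all_algebra all_fingroup.
Set Implicit Arguments. Unset Strict Implicit. Unset Printing Implicit Defensive.
Import GRing.Theory.

(* An element (k, b, c) stands for (x^k y^b, c) with k in Z/n, b, c in Z/2   *)
(* (booleans, addition = xor).  Relations: x^n = y^2 = 1, y x y^-1 = x^-1,   *)
(* so (x^a y^b)(x^c y^d) = x^(a + (-1)^b c) y^(b+d).                          *)
(* Only meaningful for n > 2 (so that 'Z_n is Z/n); the theorem assumes it.  *)
Definition DZ (n : nat) : Type := ('Z_n * bool * bool)%type.
HB.instance Definition _ (n : nat) := Finite.on (DZ n).

Section DZgroup.
Variable n : nat.
Local Open Scope ring_scope.

Definition dz_mul (g h : DZ n) : DZ n :=
  let: (a1, b1, c1) := g in let: (a2, b2, c2) := h in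
  (a1 + (if b1 then - a2 else a2), b1 (+) b2, c1 (+) c2).
Definition dz_one : DZ n := (0, false, false).
Definition dz_inv (g : DZ n) : DZ n :=
  let: (a, b, c) := g in (if b then a else - a, b, c).

Lemma dz_mulA : associative dz_mul.
Proof.
move=> [[a1 b1] c1] [[a2 b2] c2] [[a3 b3] c3] /=.
rewrite !addbA; congr (_, _, _).
by case: b1; case: b2 => /=; rewrite ?opprD ?opprK addrA.
Qed.

Lemma dz_mul1 : left_id dz_one dz_mul.
Proof. by move=> [[a b] c] /=; rewrite add0r. Qed.

Lemma dz_mulV : left_inverse dz_one dz_inv dz_mul.
Proof.
move=> [[a b] c] /=; rewrite !addbb.
by case: b; rewrite ?subrr ?addNr.
Qed.

HB.instance Definition _ := Finite_isGroup.Build (DZ n) dz_mulA dz_mul1 dz_mulV.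
End DZgroup.

Local Open Scope group_scope.

Definition dx (n : nat) : DZ n := ((1%R : 'Z_n), false, false).
Definition dy (n : nat) : DZ n := ((0%R : 'Z_n), true, false).
Definition dz (n : nat) : DZ n := ((0%R : 'Z_n), false, true).

Definition z2 (n : nat) (g : DZ n) : bool := g.2.

Definition Hsub (n : nat) : {set DZ n} := [set g : DZ n | ~~ z2 g].

(* A homomorphism f : T(m_1,..,m_r) -> G is determined by its Hurwitz vector *)
(* (f(gamma_1),...,f(gamma_r)), which must satisfy v_1 ... v_r = 1 and      *)
(* v_i^(m_i) = 1; f is surjective iff the v_i generate G.                     *)
Section Hurwitz.
Variable gT : finGroupType.

(* sigma_(i+1) (0-based index i): (.., v_i, v_(i+1), ..) |->               *)
(*   (.., v_i v_(i+1) v_i^-1, v_i, ..)                                       *)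
Definition braid (i : nat) (v : seq gT) : seq gT :=
  if i.+1 < size v then
    take i v ++ [:: nth 1 v i * nth 1 v i.+1 * (nth 1 v i)^-1; nth 1 v i]
             ++ drop i.+2 v
  else v.

(* Orbit relation of B_r x Aut(G)_H, with G = [set: gT]: the equivalence    *)
(* relation generated by the braid generators and componentwise action of    *)
(* automorphisms of G preserving H.                                          *)
Inductive hequiv (H : {set gT}) : seq gT -> seq gT -> Prop :=
| hequiv_refl v : hequiv H v v
| hequiv_braid i v : i.+1 < size v -> hequiv H v (braid i v)
| hequiv_aut (a : {perm gT}) v :
    a \in Aut [set: gT] -> a @: H = H -> hequiv H v (map a v)
| hequiv_sym v w : hequiv H v w -> hequiv H w v
| hequiv_trans u v w : hequiv H u v -> hequiv H v w -> hequiv H u w.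
End Hurwitz.

Definition admissible_IIIb (n c3 c4 : nat) (v : seq (DZ n)) : Prop :=
  [/\ size v = 4%N,
      (* f is a homomorphism: gamma_1 gamma_2 gamma_3 gamma_4 = 1 (the       *)
      (* relations gamma_i^(m_i) = 1 follow from the order conditions)      *)
      \prod_(g <- v) g = 1,
      <<[set g in v]>> = [set: DZ n],
      [/\ #[nth 1 v 0] = 2%N, #[nth 1 v 1] = 2%N,
          #[nth 1 v 2] = c3 & #[nth 1 v 3] = c4] &
      [/\ z2 (nth 1 v 0), z2 (nth 1 v 1),
          ~~ z2 (nth 1 v 2) & ~~ z2 (nth 1 v 3)]].

Definition hv_IIIb (n : nat) : seq (DZ n) :=
  [:: dy n * dx n * dz n; dz n; dy n; dx n].
Arguments admissible_IIIb : clear implicits.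
Arguments hv_IIIb : clear implicits.
Arguments Hsub : clear implicits.

From mathcomp Require Import all_boot all_algebra all_fingroup all_solvable.
From mathcomp Require Import ring.

(* Write elements of D_n x Z/2 as (a, b, c) = (x^a y^b, c).  Since f(γ4) has order
   c4 > 2 it is a rotation (k, 0, 0).  The reflection bits of f(γ1), f(γ2), f(γ3) sum
   to 0, and the proper subgroups {b = b0 c} show that f(γ3) and exactly one of f(γ1),
   f(γ2) are reflections; the other one is central, (w, 0, 1) with 2w = 0.  The proper
   subgroups {a = b r + c w mod k} then force k to be a unit, so c3 = 2 and c4 = n.
   Up to the braid σ1, which swaps the central entry, the vector is
   ((m,1,1), (w,0,1), (m-w+k,1,0), (k,0,0)), and the automorphism
   (a, b, c) ↦ (k⁻¹ a + b j + c w', b, c) of G, which preserves H, maps it to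
   ((yx,1), (e,1), (y,0), (x,0)). *)

Set Implicit Arguments. Unset Strict Implicit. Unset Printing Implicit Defensive.
Import GRing.Theory.
Local Open Scope group_scope.

Section RingModDouble.
Variable R : comPzRingType.

Lemma eq_addr_double (w x y : R) : (w + w = 0)%R -> x = (y + (w + w))%R -> x = y.
Proof. by move=> -> ->; rewrite addr0. Qed.

Lemma eq_subr_double (w x y : R) : (w + w = 0)%R -> x = (y - (w + w))%R -> x = y.
Proof. by move=> -> ->; rewrite subr0. Qed.

End RingModDouble.

(* [ring] cannot use hypotheses; this closes ring identities that hold modulo [w + w = 0]. *)
Ltac ring_mod_double Hw :=
  first [ ring | apply: (eq_addr_double Hw); ring | apply: (eq_subr_double Hw); ring ].

Lemma prod_seq4 (gT : finGroupType) (g1 g2 g3 g4 : gT) :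
  \prod_(g <- [:: g1; g2; g3; g4]) g = g1 * g2 * g3 * g4.
Proof. by rewrite !big_cons big_nil mulg1 !mulgA. Qed.

Lemma gen_seq4_subset (gT : finGroupType) (g1 g2 g3 g4 : gT) (S : {group gT}) :
  g1 * g2 * g3 * g4 = 1 -> g1 \in S -> g2 \in S -> g4 \in S ->
  <<[set g in [:: g1; g2; g3; g4]]>> \subset S.
Proof.
move=> prod1 S1 S2 S4; rewrite gen_subG; apply/subsetP => g.
rewrite inE !in_cons in_nil orbF => /or4P [] /eqP -> //.
have : g1 * g2 * g3 * g4 \in S by rewrite prod1 group1.
by rewrite groupMr // groupMl // groupM.
Qed.

Section DihedralTimesZ2.
Variable n : nat.
Local Notation G := (DZ n).
Implicit Types (a j k m u w : 'Z_n) (b c : bool).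

Lemma dz_mulE a1 b1 c1 a2 b2 c2 :
  ((a1, b1, c1) : G) * (a2, b2, c2) =
  ((a1 + (if b1 then - a2 else a2))%R, b1 (+) b2, c1 (+) c2).
Proof. by []. Qed.

Lemma dz_oneE : (1 : G) = (0%R, false, false).
Proof. by []. Qed.

Lemma dz_rotation_expE a i : ((a, false, false) : G) ^+ i = ((a *+ i)%R, false, false).
Proof.
elim: i => [|i IHi]; first by rewrite expg0 mulr0n.
by rewrite expgS IHi dz_mulE /= mulrS.
Qed.

Lemma order_dz_reflection a c : #[((a, true, c) : G)] = 2.
Proof.
apply: nt_prime_order => //; last by rewrite dz_oneE !xpair_eqE andbF.
by rewrite expgS expg1 dz_mulE /= subrr addbb.
Qed.

Lemma order_dz_rotation k : (1 < n)%N -> k \is a GRing.unit ->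
  #[((k, false, false) : G)] = n.
Proof.
move=> n_gt1 k_unit; apply/eqP; rewrite eqn_dvd; apply/andP; split.
  by rewrite order_dvdn dz_rotation_expE -mulr_natr pchar_Zp // mulr0.
have := expg_order ((k, false, false) : G).
rewrite dz_rotation_expE dz_oneE => -[/(congr1 (GRing.mul k^-1))].
rewrite mulrnAr mulVr // mulr0 => /(congr1 (@nat_of_ord _)).
by rewrite (val_Zp_nat n_gt1) => /eqP.
Qed.

Lemma dz_central_double w : #[((w, false, true) : G)] = 2 -> (w + w = 0)%R.
Proof.
move=> o2; have := expg_order ((w, false, true) : G).
by rewrite o2 expgS expg1 dz_mulE dz_oneE => /(congr1 (fun g : G => g.1.1)).
Qed.

Lemma dz_central_commute w g : (w + w = 0)%R -> commute ((w, false, true) : G) g.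
Proof.
move: g => [[a b] c] w2; rewrite /commute !dz_mulE [c (+) _]addbC.
by case: b; congr (_, _, _); ring_mod_double w2.
Qed.

Definition refl_kernel (b0 : bool) : {set G} := [set g : G | g.1.2 == (b0 && g.2)].

Lemma refl_kernel_group b0 : group_set (refl_kernel b0).
Proof.
apply/group_setP; split; first by rewrite inE andbF.
move=> [[a1 b1] c1] [[a2 b2] c2]; rewrite !inE /=.
by case: b0; case: b1; case: b2; case: c1; case: c2.
Qed.

Lemma dy_notin_refl_kernel b0 : dy n \notin refl_kernel b0.
Proof. by rewrite inE andbF. Qed.

Definition offset_sub m w k : {set G} :=
  [set g : G | [exists t : 'Z_n,
     g.1.1 - (if g.1.2 then m else 0) - (if g.2 then w else 0) == t * k]]%R.

Lemma offset_sub_group m w k : (w + w = 0)%R -> group_set (offset_sub m w k).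
Proof.
move=> w2; apply/group_setP; split.
  by rewrite inE; apply/existsP; exists 0%R; rewrite /= !subr0 mul0r.
move=> [[a1 b1] c1] [[a2 b2] c2]; rewrite !inE /=.
move=> /existsP [t1 /eqP e1] /existsP [t2 /eqP e2].
apply/existsP; exists (t1 + (if b1 then - t2 else t2))%R; apply/eqP => /=.
have {e1}-> : a1 = (t1 * k + (if b1 then m else 0) + (if c1 then w else 0))%R.
  by rewrite -e1; ring.
have {e2}-> : a2 = (t2 * k + (if b2 then m else 0) + (if c2 then w else 0))%R.
  by rewrite -e2; ring.
by case: b1; case: b2; case: c1; case: c2 => /=; ring_mod_double w2.
Qed.

Lemma offset_sub_normal_form m w k :
  [/\ ((m, true, true) : G) \in offset_sub (m - w)%R w k,
      ((w, false, true) : G) \in offset_sub (m - w)%R w k &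
      ((k, false, false) : G) \in offset_sub (m - w)%R w k].
Proof.
by split; rewrite inE; apply/existsP;
  [exists 0%R | exists 0%R | exists 1%R]; apply/eqP => /=; ring.
Qed.

Lemma dx_in_offset_sub_unit m w k : dx n \in offset_sub m w k -> k \is a GRing.unit.
Proof.
rewrite inE => /existsP [t /eqP e]; apply/unitrPr; exists t.
by rewrite mulrC -e /= !subr0.
Qed.

Definition hv_normal m w k : seq G :=
  [:: (m, true, true); (w, false, true); ((m - w + k)%R, true, false); (k, false, false)].

Lemma braid0_hv_normal m w k : (w + w = 0)%R ->
  braid 0 (hv_normal m w k) =
  [:: (w, false, true); (m, true, true); ((m - w + k)%R, true, false); (k, false, false)].
Proof.
by move=> w2; rewrite /braid /= -(dz_central_commute _ w2) mulgK.
Qed.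

Lemma prod_normal_third m w a3 k :
  ((m, true, true) : G) * (w, false, true) * (a3, true, false) * (k, false, false) = 1 ->
  a3 = (m - w + k)%R.
Proof.
rewrite !dz_mulE dz_oneE /= => /(congr1 (fun g : G => g.1.1)) /= e.
by rewrite -[a3]add0r -e; ring.
Qed.

Lemma generating_rotation_unit m w k : (w + w = 0)%R ->
  (forall S : {group G}, ((m, true, true) : G) \in S -> ((w, false, true) : G) \in S ->
     ((k, false, false) : G) \in S -> [set: G] \subset S) ->
  k \is a GRing.unit.
Proof.
move=> w2 genS; have [Sm Sw Sk] := offset_sub_normal_form m w k.
have /subsetP := genS (Group (offset_sub_group (m - w)%R k w2)) Sm Sw Sk.
by move/(_ (dx n) (in_setT _)); apply: dx_in_offset_sub_unit.
Qed.

Lemma admissible_normal_form (c3 c4 : nat) v : (2 < c4)%N -> admissible_IIIb n c3 c4 v ->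
  exists m w k, [/\ (w + w = 0)%R, k \is a GRing.unit &
    v = hv_normal m w k \/ v = braid 0 (hv_normal m w k)].
Proof.
move=> c4_gt2 [size4 prod1 genG [o1 o2 _ o4] [z1 z2' z3 z4]].
case: v size4 prod1 genG o1 o2 o4 z1 z2' z3 z4 =>
  [|[[a1 b1] c1] [|[[a2 b2] c2] [|[[a3 b3] c3'] [|[[a4 b4] c4'] [|]]]]] // _.
rewrite prod_seq4 /z2 /=; case: c1 c2 c3' c4' => [] [] [] [] //.
move=> prod1 genG o1 o2 o4 _ _ _ _.
have {genG} genS : forall S : {group G},
    ((a1, b1, true) : G) \in S -> ((a2, b2, true) : G) \in S ->
    ((a4, b4, false) : G) \in S -> [set: G] \subset S.
  by move=> S; rewrite -genG; apply: gen_seq4_subset.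
have b4F : b4 = false.
  by apply: contraTF c4_gt2 => b4T; rewrite -o4 b4T order_dz_reflection.
subst b4.
have not_in_refl_kernel b0 : ((a1, b1, true) : G) \in refl_kernel b0 ->
    ((a2, b2, true) : G) \in refl_kernel b0 ->
    ((a4, false, false) : G) \in refl_kernel b0 -> False.
  move=> h1 h2 h4; have /subsetP := genS (Group (refl_kernel_group b0)) h1 h2 h4.
  by move/(_ (dy n) (in_setT _)); rewrite (negbTE (dy_notin_refl_kernel _)).
have := congr1 (fun g : G => g.1.2) prod1; rewrite /= addbF.
case: b1 b2 b3 genS not_in_refl_kernel prod1 o1 o2
  => [] [] [] //= genS not_in_refl_kernel prod1 o1 o2 _.
- by case: (not_in_refl_kernel true); rewrite !inE.
- have w2 := dz_central_double o2.
  exists a1, a2, a4; split=> //; first exact: generating_rotation_unit w2 genS.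
  by left; rewrite (prod_normal_third prod1).
- have w2 := dz_central_double o1.
  rewrite (dz_central_commute (a2, true, true) w2) in prod1.
  exists a2, a1, a4; split.
  + exact: w2.
  + exact: (generating_rotation_unit w2 (fun S Sr Sz Sk => genS S Sz Sr Sk)).
  + by right; rewrite braid0_hv_normal // (prod_normal_third prod1).
- by case: (not_in_refl_kernel false); rewrite !inE.
Qed.

Definition dz_affine u j w (g : G) : G :=
  let: (a, b, c) := g in
  ((u * a + (if b then j else 0) + (if c then w else 0))%R, b, c).

Lemma dz_affine_inj u j w : u \is a GRing.unit -> injective (dz_affine u j w).
Proof.
move=> u_unit [[a1 b1] c1] [[a2 b2] c2] /eqP; rewrite !xpair_eqE.
case/andP=> [/andP [/eqP e /eqP eb] /eqP ec]; subst b2 c2.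
by move/addIr/addIr/(mulrI u_unit): e => ->.
Qed.

Lemma dz_affine_morph u j w : (w + w = 0)%R -> {morph dz_affine u j w : g h / g * h}.
Proof.
move=> w2 [[a1 b1] c1] [[a2 b2] c2]; rewrite /= !dz_mulE.
by case: b1; case: b2; case: c1; case: c2 => /=; congr (_, _, _); ring_mod_double w2.
Qed.

Section AffineAutomorphism.
Variables (u j w : 'Z_n).
Hypotheses (u_unit : u \is a GRing.unit) (w2 : (w + w = 0)%R).

Definition dz_affine_perm : {perm G} := perm (@dz_affine_inj u j w u_unit).

Lemma dz_affine_Aut : dz_affine_perm \in Aut [set: G].
Proof.
rewrite inE; apply/andP; split; first exact/subsetP.
by apply/morphicP => g h _ _; rewrite !permE; apply: dz_affine_morph.
Qed.

Lemma dz_affine_Hsub : dz_affine_perm @: Hsub n = Hsub n.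
Proof.
apply/eqP; rewrite eqEcard card_imset ?leqnn ?andbT; last exact: perm_inj.
by apply/subsetP => _ /imsetP [[[a b] c] Hg ->]; rewrite permE; move: Hg; rewrite !inE.
Qed.

End AffineAutomorphism.

Lemma hv_IIIbE : hv_IIIb n =
  [:: ((-1)%R, true, true); (0%R, false, true); (0%R, true, false); (1%R, false, false)].
Proof. by rewrite /hv_IIIb /dx /dy /dz !dz_mulE add0r oppr0 addr0. Qed.

Lemma hv_normal_hequiv m w k : (w + w = 0)%R -> k \is a GRing.unit ->
  hequiv (Hsub n) (hv_normal m w k) (hv_IIIb n).
Proof.
move=> w2 k_unit; set u := (k^-1)%R; set w' := (- (u * w))%R.
have u_unit : u \is a GRing.unit by rewrite unitrV.
have w'2 : (w' + w' = 0)%R by rewrite -opprD -mulrDr w2 mulr0 oppr0.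
pose j := (-1 - u * m - w')%R.
suff <- : map (dz_affine_perm j w' u_unit) (hv_normal m w k) = hv_IIIb n.
  by apply: hequiv_aut; [apply: dz_affine_Aut | apply: dz_affine_Hsub].
have uk : (u * k = 1)%R by rewrite mulVr.
rewrite hv_IIIbE /= !permE /= /j /w'.
by congr [:: (_, _, _); (_, _, _); (_, _, _); (_, _, _)]; rewrite ?mulrDr ?uk; ring.
Qed.

Lemma admissible_hequiv (c3 c4 : nat) v : (2 < c4)%N -> admissible_IIIb n c3 c4 v ->
  hequiv (Hsub n) v (hv_IIIb n).
Proof.
move=> c4_gt2 adm.
have [m [w [k [w2 k_unit [->|->]]]]] := admissible_normal_form c4_gt2 adm.
  exact: hv_normal_hequiv.
apply: hequiv_trans (hv_normal_hequiv m w2 k_unit).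
exact/hequiv_sym/hequiv_braid.
Qed.

Lemma admissible_orders (c3 c4 : nat) v : (1 < n)%N -> (2 < c4)%N ->
  admissible_IIIb n c3 c4 v -> c3 = 2%N /\ c4 = n.
Proof.
move=> n_gt1 c4_gt2 adm; have [_ _ _ [_ _ <- <-] _] := adm.
have [m [w [k [w2 k_unit vE]]]] := admissible_normal_form c4_gt2 adm.
have [-> ->] : nth 1 v 2 = ((m - w + k)%R, true, false) /\ nth 1 v 3 = (k, false, false).
  by case: vE => ->; rewrite ?braid0_hv_normal.
by rewrite order_dz_reflection order_dz_rotation.
Qed.

Lemma dz_decomposition a b c :
  ((a, b, c) : G) = dx n ^+ a * (if b then dy n else 1) * (if c then dz n else 1).
Proof.
rewrite /dx /dy /dz dz_rotation_expE natr_Zp.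
by case: b; case: c; rewrite ?mulg1 ?dz_mulE /=; congr (_, _, _); ring.
Qed.

Lemma hv_IIIb_generates : <<[set g in hv_IIIb n]>> = [set: G].
Proof.
apply/eqP; rewrite eqEsubset subsetT /=; apply/subsetP => -[[a b] c] _.
have gen_hv g : g \in [:: dx n; dy n; dz n] -> g \in <<[set g in hv_IIIb n]>>.
  move=> hg; apply: mem_gen; rewrite inE !in_cons.
  by move: hg; rewrite !inE => /or3P [] ->; rewrite ?orbT.
rewrite dz_decomposition; case: b; case: c;
  by rewrite !groupM ?groupX ?group1 ?gen_hv ?inE ?eqxx ?orbT.
Qed.

Lemma hv_IIIb_admissible : (1 < n)%N -> admissible_IIIb n 2 n (hv_IIIb n).
Proof.
move=> n_gt1; rewrite /admissible_IIIb hv_IIIbE; split=> //.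
- by rewrite prod_seq4 !dz_mulE dz_oneE /=; congr (_, _, _); ring.
- by rewrite -hv_IIIbE hv_IIIb_generates.
- split=> /=; rewrite ?order_dz_reflection //.
    by apply: nt_prime_order => //; rewrite expgS expg1 dz_mulE addr0.
  by rewrite order_dz_rotation // unitr1.
Qed.
End DihedralTimesZ2.

Theorem lemma5p14 (n c3 c4 : nat) (f : seq (DZ n)) :
  (2 < n)%N -> (2 <= c3)%N -> (c3 <= c4)%N -> (2 < c4)%N ->
  admissible_IIIb n c3 c4 f ->
  [/\ c3 = 2%N, c4 = n,
      admissible_IIIb n c3 c4 (hv_IIIb n) &
      forall g : seq (DZ n), admissible_IIIb n c3 c4 g ->
        hequiv (Hsub n) g (hv_IIIb n)].
Proof.
move=> n_gt2 _ _ c4_gt2 adm_f; have n_gt1 := ltnW n_gt2.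
have [c3E c4E] := admissible_orders n_gt1 c4_gt2 adm_f.
split=> //; first by rewrite c3E c4E; apply: hv_IIIb_admissible.
by move=> g; apply: admissible_hequiv.
Qed.
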